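(* Let $V$ be a real vector space of dimension $d>1$ and $\Gamma<\mathrm{SL}(V)$ a torsion-free projective Anosov subgroup with limit maps $\xi,\xi^*$. Let $\gamma_k\in\Gamma$ be a sequence with distinct boundary limits $\gamma_+=\lim\gamma_k\in\partial_\infty\Gamma$ and $\gamma_-=\lim\gamma_k^{-1}\in\partial_\infty\Gamma$. Then for any sequence $v_k\to v\in V\setminus\{0\}$ such that $[v]\not\subset\ker\xi^*(\gamma_-)$, one has $\gamma_kv_k\to\infty$ as $k\to\infty$.
   Context: Projective Anosov: finitely generated Gromov hyperbolic with $\lambda_1(\gamma)-\lambda_2(\gamma)\ge c|\gamma|_\infty-c'$ for constants $c,c'>0$ ($\lambda_i$ log-moduli of eigenvalues in decreasing order, $|\cdot|_\infty$ stable word length). The limit maps $\xi:\partial_\infty\Gamma\to\mathbb{P}(V)$, $\xi^*:\partial_\infty\Gamma\to\mathbb{P}(V^* )$ are the unique continuous $\Gamma$-equivariant maps with $\xi(x)\subset\ker\xi^*(y)$ iff $x=y$ and $\xi(\gamma_+)$ (resp. $\xi^*(\gamma_-)$) the top eigenline of infinite order $\gamma$ (resp. of its dual action). Convergence $\gamma_k\to\gamma_+$ is in the compactification $\Gamma\cup\partial_\infty\Gamma$. $\gamma_kv_k\to\infty$ means the sequence leaves every compact subset of $V$. *)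

From HB Require Import structures.
From mathcomp Require Import all_boot all_order all_algebra.
From mathcomp Require Import all_classical all_reals all_analysis.
From mathcomp Require Import complex.

Set Implicit Arguments.
Unset Strict Implicit.
Unset Printing Implicit Defensive.

Import Order.TTheory GRing.Theory Num.Theory.
Import numFieldNormedType.Exports.
Local Open Scope classical_set_scope.
Local Open Scope ring_scope.

Section Defs.
Variables (R : realType) (d : nat).
Local Notation M := 'M[R]_d.
Local Notation V := 'cV[R]_d.
Local Notation Vs := 'rV[R]_d.

Definition mxpow (g : M) (n : nat) : M := iter n (mulmx g) 1%:M.

Definition subgroup_SL (G : set M) : Prop :=
  [/\ G 1%:M,
      (forall g h, G g -> G h -> G (g *m h)),
      (forall g, G g -> G (invmx g)) &
      (forall g, G g -> \det g = 1)].

Definition torsion_free (G : set M) : Prop :=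
  forall g, G g -> g != 1%:M -> forall n : nat, (0 < n)%N -> mxpow g n != 1%:M.

Definition is_letter (S : seq M) (a : M) : bool := (a \in S) || (invmx a \in S).

Definition word_reach (S : seq M) (g : M) (n : nat) : Prop :=
  exists w : seq M, [/\ size w = n, all (is_letter S) w & foldr mulmx 1%:M w = g].

Definition wordlen (S : seq M) (g : M) : nat :=
  match pselect (exists n, (fun n => `[< word_reach S g n >]) n) with
  | left H => ex_minn H
  | right _ => 0%N
  end.

Definition generates (S : seq M) (G : set M) : Prop :=
  (forall a, a \in S -> G a) /\ (forall g, G g -> exists n, word_reach S g n).

(** Gromov product (x|y)_w in the word metric d(x,y) = |x^-1 y| *)
Definition gprod (S : seq M) (w x y : M) : R :=
  ((wordlen S (invmx w *m x))%:R + (wordlen S (invmx w *m y))%:R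
    - (wordlen S (invmx x *m y))%:R) / 2.

Definition gprod0 (S : seq M) (x y : M) : R := gprod S 1%:M x y.

Definition hyperbolic_group (S : seq M) (G : set M) : Prop :=
  exists delta : R, 0 <= delta /\
    forall w x y z, G w -> G x -> G y -> G z ->
      Num.min (gprod S w x y) (gprod S w y z) - delta <= gprod S w x z.

Definition tends_infty2 (f : nat -> nat -> R) : Prop :=
  forall B : R, exists N : nat, forall m n, (N <= m)%N -> (N <= n)%N -> B <= f m n.

(** Gromov boundary: sequences in G converging at infinity, up to equivalence *)
Definition bd_point (S : seq M) (G : set M) (a : nat -> M) : Prop :=
  (forall n, G (a n)) /\ tends_infty2 (fun m n => gprod0 S (a m) (a n)).

Definition bd_equiv (S : seq M) (a b : nat -> M) : Prop :=
  tends_infty2 (fun m n => gprod0 S (a m) (b n)).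

Definition seq_to_bd (S : seq M) (g : nat -> M) (a : nat -> M) : Prop :=
  tends_infty2 (fun k n => gprod0 S (g k) (a n)).

Definition bd_conv (S : seq M) (x : nat -> nat -> M) (a : nat -> M) : Prop :=
  forall B : R, exists K : nat, forall k, (K <= k)%N ->
    exists N : nat, forall m n, (N <= m)%N -> (N <= n)%N -> B <= gprod0 S (x k m) (a n).

(** projective lines: nonzero vectors up to nonzero scalars *)
Definition same_line (m n : nat) (u v : 'M[R]_(m, n)) : Prop :=
  exists c : R, c != 0 /\ u = c *: v.

(** eigenvalues: complex roots (with multiplicity) of the characteristic polynomial *)
Definition toC (x : R) : complex.complex R := complex.Complex x 0.
Definition modC (z : complex.complex R) : R :=
  Num.sqrt (complex.Re z ^+ 2 + complex.Im z ^+ 2).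

Definition eig_seq (g : M) (s : seq (complex.complex R)) : Prop :=
  map_poly toC (char_poly g) = \prod_(z <- s) ('X - z%:P).

Definition top_modulus (g : M) (mu : R) : Prop :=
  forall s, eig_seq g s -> forall z, z \in s -> modC z <= `|mu|.

Definition stable_len (S : seq M) (g : M) : R :=
  limn (fun n : nat => ((wordlen S (mxpow g n))%:R / n%:R : R)).

(** lambda_1(g) - lambda_2(g), computed from a list s of eigenvalues *)
Definition lam12 (s : seq (complex.complex R)) : R :=
  let m := sort (fun x y : R => y <= x) (map modC s) in
  ln (nth 0 m 0) - ln (nth 0 m 1).

Definition projective_anosov (S : seq M) (G : set M) : Prop :=
  hyperbolic_group S G /\
  exists c c' : R, 0 < c /\ 0 < c' /\
    forall g, G g -> forall s, eig_seq g s -> c * stable_len S g - c' <= lam12 s.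

(** xi : boundary -> P(V), xis : boundary -> P(dual of V) are the limit maps:
    V = column vectors, dual of V = row vectors, pairing phi(v) = phi *m v,
    dual action g.phi = phi *m g^-1. Boundary points are represented by
    sequences converging at infinity. *)
Definition limit_maps (S : seq M) (G : set M)
    (xi : (nat -> M) -> V) (xis : (nat -> M) -> Vs) : Prop :=
      (forall a, bd_point S G a -> xi a != 0 /\ xis a != 0) /\
      (forall a b, bd_point S G a -> bd_point S G b -> bd_equiv S a b ->
         same_line (xi a) (xi b) /\ same_line (xis a) (xis b)) /\
      (forall g a, G g -> bd_point S G a ->
         same_line (xi (fun n => g *m a n)) (g *m xi a) /\
         same_line (xis (fun n => g *m a n)) (xis a *m invmx g)) /\
      (forall (x : nat -> nat -> M) a, (forall k, bd_point S G (x k)) -> bd_point S G a ->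
         bd_conv S x a ->
         (exists w : nat -> V, (forall k, same_line (w k) (xi (x k))) /\ w @ \oo --> xi a) /\
         (exists w : nat -> Vs, (forall k, same_line (w k) (xis (x k))) /\ w @ \oo --> xis a)) /\
      (forall a b, bd_point S G a -> bd_point S G b ->
         (xis b *m xi a = 0 <-> bd_equiv S a b)) /\
      (* dynamics preserving: xi(g_+) top eigenline of g, xis(g_-) top eigenline of
         the dual (transpose) action of g; g_+ = [g^n], g_- = [g^-n] *)
      (forall g, G g -> (forall n, (0 < n)%N -> mxpow g n != 1%:M) ->
         (exists mu : R, g *m xi (mxpow g) = mu *: xi (mxpow g) /\ top_modulus g mu) /\
         (exists mu : R, xis (mxpow (invmx g)) *m g = mu *: xis (mxpow (invmx g))
                         /\ top_modulus g mu)).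

End Defs.

(* For large k the Gromov product (gam_k | gam_k^-1) stays bounded, since gam_k
   and gam_k^-1 converge to the distinct boundary points gam_+ and gam_-.  In a
   hyperbolic group this forces the powers of gam_k to grow linearly with speed
   about |gam_k|, so the stable length of gam_k, and with it (projective Anosov)
   the top eigenvalue mu_k of gam_k, tend to infinity.  The repelling points
   gam_k^- = lim gam_k^-n converge to gam_-, so by continuity suitable multiples
   w_k of xi*(gam_k^-) converge to xi*(gam_-), which does not vanish on v.  As
   w_k gam_k = mu_k w_k, the pairing w_k (gam_k v_k) = mu_k (w_k v_k) shows that
   gam_k v_k cannot stay in a compact set. *)

From HB Require Import structures.
From mathcomp Require Import all_boot all_order all_algebra.
From mathcomp Require Import all_classical all_reals all_analysis.
From mathcomp Require Import complex.
From mathcomp Require Import ring lra.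

Import Order.TTheory GRing.Theory Num.Theory.
Import numFieldNormedType.Exports.
Local Open Scope classical_set_scope.
Local Open Scope ring_scope.
Set Implicit Arguments.
Unset Strict Implicit.

Section MatrixPowers.
Variables (R : realType) (d : nat).
Implicit Types (g h : 'M[R]_d).

Lemma invmx_mul g h :
  g \in unitmx -> h \in unitmx -> invmx (g *m h) = invmx h *m invmx g.
Proof.
move=> ug uh; have ugh : g *m h \in unitmx by rewrite unitmx_mul ug uh.
have inv : (g *m h) *m (invmx h *m invmx g) = 1%:M.
  by rewrite -mulmxA (mulmxA h) mulmxV // mul1mx mulmxV.
by rewrite -[LHS]mulmx1 -inv mulmxA mulVmx // mul1mx.
Qed.

Lemma mxpow0 g : mxpow g 0 = 1%:M.
Proof. by []. Qed.

Lemma mxpowS g n : mxpow g n.+1 = g *m mxpow g n.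
Proof. by []. Qed.

Lemma mxpow1 g : mxpow g 1 = g.
Proof. exact: mulmx1. Qed.

Lemma mxpowD g m n : mxpow g (m + n) = mxpow g m *m mxpow g n.
Proof. by elim: m => [|m IH]; rewrite ?mul1mx // addSn !mxpowS IH mulmxA. Qed.

Lemma mxpowSr g n : mxpow g n.+1 = mxpow g n *m g.
Proof. by rewrite -addn1 mxpowD mxpow1. Qed.

Lemma mxpow_unitmx g n : g \in unitmx -> mxpow g n \in unitmx.
Proof.
by move=> ug; elim: n => [|n IH]; rewrite ?unitmx1 // mxpowS unitmx_mul ug IH.
Qed.

Lemma mxpow_invmx g n : g \in unitmx -> mxpow (invmx g) n = invmx (mxpow g n).
Proof.
move=> ug; elim: n => [|n IH]; first by rewrite invmx1.
by rewrite mxpowS IH mxpowSr invmx_mul ?mxpow_unitmx.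
Qed.

Lemma mxpow_divl g i j : g \in unitmx -> (i <= j)%N ->
  invmx (mxpow g i) *m mxpow g j = mxpow g (j - i).
Proof.
move=> ug le_ij; rewrite -{1}(subnKC le_ij) mxpowD mulmxA.
by rewrite mulVmx ?mul1mx ?mxpow_unitmx.
Qed.

End MatrixPowers.

Section Fekete.
Variables (R : realType) (a : nat -> R).
Hypothesis a_ge0 : forall n, 0 <= a n.
Hypothesis a_subadd : forall m n, a (m + n) <= a m + a n.

Lemma subadditive_mul_le q m r : a (q * m + r) <= q%:R * a m + a r.
Proof.
elim: q => [|q IH]; first by rewrite mul0n add0n mul0r add0r.
rewrite mulSn -addnA -natr1 mulrDl mul1r; apply: le_trans (a_subadd _ _) _; lra.
Qed.

Lemma subadditive_cvgn : cvgn (fun n => a n / n%:R).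
Proof.
pose E := [set a n / n%:R | n in [set n | (0 < n)%N]].
have E_lb : lbound E 0 by move=> _ [n _ <-]; rewrite divr_ge0.
have E_inf : has_inf E by split; [exists (a 1 / 1); exists 1%N | exists 0].
apply/cvg_ex; exists (inf E); apply/cvgrPdist_lt => eps eps_gt0.
have eps2_gt0 : 0 < eps / 2 by rewrite divr_gt0.
have [_ [m m_gt0 <-] am_lt] := inf_adherent eps2_gt0 E_inf.
pose K := a 0 + m%:R * a 1.
have aK r : (r < m)%N -> a r <= K.
  move=> lt_rm; have := subadditive_mul_le r 1 0; rewrite muln1 addn0 /K => ar.
  apply: le_trans ar _; rewrite addrC lerD2l ler_wpM2r // ler_nat; exact: ltnW.
have [N NK] : exists N : nat, K < N%:R * (eps / 2).
  have K_ge0 : 0 <= K by rewrite addr_ge0 ?mulr_ge0.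
  exists (Num.bound (K / (eps / 2))).+1; rewrite -ltr_pdivrMr //.
  apply: lt_trans (archi_boundP _) _; first by rewrite divr_ge0 // ltW.
  by rewrite ltr_nat.
near=> n; have n_gt0 : (0 < n)%N by near: n; exists 1%N.
have n_ge : (N <= n)%N by near: n; exists N.
have ge_inf : inf E <= a n / n%:R by apply: ge_inf => //; [exists 0 | exists n].
rewrite distrC ger0_norm ?subr_ge0 // ltrBlDl ltr_pdivrMr; last by rewrite ltr0n.
have lt_rm : (n %% m < m)%N by rewrite ltn_pmod.
move: (n %/ m)%N (n %% m)%N lt_rm (divn_eq n m) => q r lt_rm def_n.
rewrite {}def_n in n_gt0 n_ge *.
have qm : q%:R * a m <= (inf E + eps / 2) * (q * m + r)%:R.
  rewrite ltr_pdivrMr ?ltr0n // in am_lt.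
  apply: le_trans (_ : q%:R * ((inf E + eps / 2) * m%:R) <= _).
    by rewrite ler_wpM2l // ltW.
  have inf_ge0 : 0 <= inf E by apply: lb_le_inf => //; exists (a 1 / 1); exists 1%N.
  rewrite mulrCA ler_wpM2l ?addr_ge0 ?(ltW eps2_gt0) //.
  by rewrite -natrM ler_nat leq_addr.
have Kn : K < (q * m + r)%:R * (eps / 2).
  by apply: lt_le_trans NK _; rewrite ler_wpM2r ?ler_nat // ltW ?divr_gt0.
apply: le_lt_trans (subadditive_mul_le q m r) _.
have := aK r lt_rm; lra.
Unshelve. all: by end_near.
Qed.

Lemma limn_subadditive_ge b : (forall n, n%:R * b <= a n) ->
  b <= limn (fun n => a n / n%:R).
Proof.
move=> ab; apply: limr_ge; first exact: subadditive_cvgn.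
by exists 1%N => // n n_gt0; rewrite ler_pdivlMr ?ltr0n // mulrC.
Qed.

End Fekete.

Section WordLength.
Variables (R : realType) (d : nat) (S : seq 'M[R]_d).
Implicit Types (g : 'M[R]_d) (w : seq 'M[R]_d).

Lemma wordlen_min g n : word_reach S g n -> (wordlen S g <= n)%N.
Proof.
move=> reach; rewrite /wordlen; case: pselect => [ex|[]]; last first.
  by exists n; apply/asboolP.
by case: (ex_minnP ex) => m _; apply; apply/asboolP.
Qed.

Lemma wordlen_reach g : (exists n, word_reach S g n) -> word_reach S g (wordlen S g).
Proof.
move=> [n reach]; rewrite /wordlen; case: pselect => [ex|[]]; last first.
  by exists n; apply/asboolP.
by case: (ex_minnP ex) => m /asboolP.
Qed.

Lemma wordlen1 : wordlen S 1%:M = 0%N.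
Proof. by apply/eqP; rewrite -leqn0; apply: wordlen_min; exists [::]. Qed.

Lemma foldr_mulmx_cat w1 w2 :
  foldr mulmx 1%:M (w1 ++ w2) = foldr mulmx 1%:M w1 *m foldr mulmx 1%:M w2.
Proof. by elim: w1 => [|a w IH] /=; rewrite ?mul1mx // IH mulmxA. Qed.

End WordLength.

Section WordMetric.
Variables (R : realType) (d : nat) (G : set 'M[R]_d) (S : seq 'M[R]_d).
Hypotheses (SL_G : subgroup_SL G) (gen_S : generates S G).
Implicit Types (g x y : 'M[R]_d).

Local Notation len g := ((wordlen S g)%:R : R).

Lemma SL_group1 : G 1%:M.
Proof. by case: SL_G. Qed.

Lemma SL_groupM x y : G x -> G y -> G (x *m y).
Proof. by case: SL_G => _ + _ _; apply. Qed.

Lemma SL_groupV g : G g -> G (invmx g).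
Proof. by case: SL_G => _ _ + _; apply. Qed.

Lemma SL_unitmx g : G g -> g \in unitmx.
Proof. by case: SL_G => _ _ _ det1 /det1 det_g; rewrite unitmxE det_g unitr1. Qed.

Lemma SL_group_mxpow g n : G g -> G (mxpow g n).
Proof.
move=> Gg; elim: n => [|n IH]; first exact: SL_group1.
by rewrite mxpowS; apply: SL_groupM.
Qed.

Lemma letter_unitmx a : is_letter S a -> a \in unitmx.
Proof.
case: gen_S => inS _ /orP[/inS/SL_unitmx //|/inS/SL_unitmx].
by rewrite unitmx_inv.
Qed.

Lemma word_unitmx w : all (is_letter S) w -> foldr mulmx 1%:M w \in unitmx.
Proof.
elim: w => [_|a w IH /andP[la /IH]] /=; first exact: unitmx1.
by rewrite unitmx_mul (letter_unitmx la).
Qed.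

Lemma wordlen_mulmx x y : G x -> G y ->
  (wordlen S (x *m y) <= wordlen S x + wordlen S y)%N.
Proof.
case: gen_S => _ reach /reach/wordlen_reach[w1 [<- all1 <-]].
move=> /reach/wordlen_reach[w2 [<- all2 <-]].
apply: wordlen_min; exists (w1 ++ w2).
by rewrite size_cat all_cat all1 all2 foldr_mulmx_cat.
Qed.

Lemma wordlen_invmx_le g : G g -> (wordlen S (invmx g) <= wordlen S g)%N.
Proof.
case: gen_S => _ reach /reach/wordlen_reach[w [<- all_w <-]].
apply: wordlen_min; exists (rev (map invmx w)); split.
- by rewrite size_rev size_map.
- rewrite all_rev all_map; apply/allP => a /(allP all_w) /=.
  by rewrite /is_letter invmxK orbC.
elim: w all_w => [|a w IH] /=; first by rewrite invmx1.
case/andP=> la all_w; rewrite rev_cons -cats1 foldr_mulmx_cat /= IH //.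
by rewrite mulmx1 invmx_mul ?(letter_unitmx la) ?word_unitmx.
Qed.

Lemma wordlen_invmx g : G g -> wordlen S (invmx g) = wordlen S g.
Proof.
move=> Gg; apply/eqP; rewrite eqn_leq wordlen_invmx_le //=.
by have := wordlen_invmx_le (SL_groupV Gg); rewrite invmxK.
Qed.

Lemma wordlen_dist_sym x y : G x -> G y ->
  wordlen S (invmx x *m y) = wordlen S (invmx y *m x).
Proof.
move=> Gx Gy; rewrite -wordlen_invmx; last exact/SL_groupM/Gy/SL_groupV.
by rewrite invmx_mul ?invmxK ?unitmx_inv ?SL_unitmx.
Qed.

Lemma gprod_sym w x y : G x -> G y -> gprod S w x y = gprod S w y x.
Proof.
by move=> Gx Gy; rewrite /gprod (wordlen_dist_sym Gx Gy); congr (_ / 2); ring.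
Qed.

Lemma gprod0_le_wordlen x y : G x -> G y -> gprod0 S x y <= len x.
Proof.
move=> Gx Gy; rewrite /gprod0 /gprod invmx1 !mul1mx ler_pdivrMr //.
have := wordlen_mulmx Gx (SL_groupM (SL_groupV Gx) Gy).
rewrite mulmxA mulmxV ?SL_unitmx // mul1mx -(ler_nat R) natrD; lra.
Qed.

Lemma gprod0_ge0 x y : G x -> G y -> 0 <= gprod0 S x y.
Proof.
move=> Gx Gy; rewrite /gprod0 /gprod invmx1 !mul1mx divr_ge0 // subr_ge0.
by rewrite -natrD ler_nat -(wordlen_invmx Gx) (wordlen_mulmx (SL_groupV Gx) Gy).
Qed.

Lemma gprod0_invmx g : G g ->
  gprod0 S g (invmx g) = (len g + len g - len (mxpow g 2)) / 2.
Proof.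
move=> Gg; rewrite /gprod0 /gprod invmx1 !mul1mx wordlen_invmx //.
rewrite -invmx_mul ?SL_unitmx // wordlen_invmx; last exact: SL_groupM.
by rewrite (mxpowS g 1) mxpow1.
Qed.

Lemma wordlen_mxpow_dist g i j : G g -> (i <= j)%N ->
  wordlen S (invmx (mxpow g i) *m mxpow g j) = wordlen S (mxpow g (j - i)) /\
  wordlen S (invmx (mxpow g j) *m mxpow g i) = wordlen S (mxpow g (j - i)).
Proof.
move=> Gg le_ij; have Gpow k := SL_group_mxpow k Gg.
by rewrite -(wordlen_dist_sym (Gpow i)) // mxpow_divl ?SL_unitmx.
Qed.

Definition powers_grow g (r : R) :=
  forall n, len (mxpow g n) + r <= len (mxpow g n.+1).

Variable delta : R.
Hypothesis delta_ge0 : 0 <= delta.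
Hypothesis thin : forall w x y z, G w -> G x -> G y -> G z ->
  Num.min (gprod S w x y) (gprod S w y z) - delta <= gprod S w x z.

Lemma thin_mxpow g m : G g ->
  Num.min ((len g + len (mxpow g m.+1) - len (mxpow g m)) / 2)
          ((len (mxpow g m.+1) + len g - len (mxpow g m.+2)) / 2) - delta
  <= gprod0 S g (invmx g).
Proof.
move=> Gg; have Gpow k := SL_group_mxpow k Gg.
have := thin (Gpow m.+1) (Gpow m) (Gpow 0) (Gpow m.+2); rewrite /gprod.
have [-> _] := wordlen_mxpow_dist Gg (leqnSn m.+1).
have [_ ->] := wordlen_mxpow_dist Gg (leqnSn m).
have [_ ->] := wordlen_mxpow_dist Gg (leq0n m.+1).
have [_ ->] := wordlen_mxpow_dist Gg (leq0n m).
have [-> _] := wordlen_mxpow_dist Gg (leq0n m.+2).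
have [-> _] := wordlen_mxpow_dist Gg (leq_trans (leqnSn m) (leqnSn m.+1)).
have -> : (m.+2 - m = 2)%N by rewrite -addn2 addKn.
by rewrite gprod0_invmx // !subn0 !subSnn mxpow1.
Qed.

Lemma powers_grow_thin g c : G g -> gprod0 S g (invmx g) <= c ->
  2 * (c + delta) < len g -> powers_grow g (len g - 2 * (c + delta)).
Proof.
move=> Gg small long; have d0 := delta_ge0.
have gp := gprod0_invmx Gg; have gp_ge0 := gprod0_ge0 Gg (SL_groupV Gg).
(* By induction on m: as len g > 2 (c + delta), the first term of the minimum in
   [thin_mxpow] stays above c + delta, so thinness bounds the second one. *)
have step m : len (mxpow g m.+1) + len g - len (mxpow g m.+2) <= 2 * (c + delta).
  elim: m => [|m IH]; first by rewrite mxpow1; lra.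
  have := thin_mxpow m.+1 Gg; rewrite lerBlDr ge_min => /orP[]; lra.
by case=> [|n]; rewrite ?mxpow0 ?wordlen1 ?mxpow1 ?add0r; [lra | have := step n; lra].
Qed.

Section PowersGrow.
Variables (g : 'M[R]_d) (r : R).
Hypotheses (Gg : G g) (grow : powers_grow g r).

Lemma powers_grow_invmx : powers_grow (invmx g) r.
Proof.
have len_inv k : len (mxpow (invmx g) k) = len (mxpow g k).
  by rewrite mxpow_invmx ?SL_unitmx // wordlen_invmx //; exact: SL_group_mxpow.
by move=> n; rewrite !len_inv.
Qed.

Lemma powers_grow_shift m k : len (mxpow g m) + k%:R * r <= len (mxpow g (m + k)).
Proof.
elim: k => [|k IH]; first by rewrite mul0r addr0 addn0.
by rewrite addnS -natr1 mulrDl mul1r; have := grow (m + k); lra.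
Qed.

Lemma powers_grow_ge n : n%:R * r <= len (mxpow g n).
Proof. by have := powers_grow_shift 0 n; rewrite mxpow0 wordlen1 add0r. Qed.

Lemma powers_grow_stable_len : r <= stable_len S g.
Proof.
apply: limn_subadditive_ge => [n|m n|]; [exact: ler0n | | exact: powers_grow_ge].
by rewrite mxpowD -natrD ler_nat; apply: wordlen_mulmx; apply: SL_group_mxpow.
Qed.

Lemma powers_grow_mxpow_neq1 n : 0 < r -> (0 < n)%N -> mxpow g n != 1%:M.
Proof.
move=> r_gt0 n_gt0; apply/eqP => gn1.
by have := powers_grow_ge n; rewrite gn1 wordlen1 leNgt mulr_gt0 ?ltr0n.
Qed.

Lemma powers_grow_gprod0 m n : (m <= n)%N ->
  m%:R * r <= gprod0 S (mxpow g m) (mxpow g n).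
Proof.
move=> le_mn; rewrite /gprod0 /gprod invmx1 !mul1mx.
have [-> _] := wordlen_mxpow_dist Gg le_mn.
have := powers_grow_shift (n - m) m; rewrite subnK // => shift.
have := powers_grow_ge m; lra.
Qed.

Lemma powers_grow_bd_point : 0 < r -> bd_point S G (mxpow g).
Proof.
move=> r_gt0; split=> [n|B]; first exact: SL_group_mxpow.
exists (Num.bound `|B / r|) => m n le_m le_n.
suff le_B k : (Num.bound `|B / r| <= k)%N -> B <= k%:R * r.
  have [le_mn|/ltnW le_nm] := leqP m n.
    exact: le_trans (le_B m le_m) (powers_grow_gprod0 le_mn).
  rewrite /gprod0 (gprod_sym _ (SL_group_mxpow m Gg) (SL_group_mxpow n Gg)).
  exact: le_trans (le_B n le_n) (powers_grow_gprod0 le_nm).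
move=> le_k; rewrite -ler_pdivrMr //; apply: le_trans (ler_norm _) _.
by apply: le_trans (ltW (archi_boundP _)) _; rewrite ?ler_nat.
Qed.

Lemma powers_grow_gprod0_step m : (len g + r) / 2 <= gprod0 S (mxpow g m.+1) g.
Proof.
rewrite -{3}(mxpow1 g) /gprod0 /gprod invmx1 !mul1mx.
have [_ ->] := wordlen_mxpow_dist Gg (ltn0Sn m).
by rewrite subn1 mxpow1; have := grow m; lra.
Qed.

End PowersGrow.

Lemma gprod0_thin x y z X : G x -> G y -> G z ->
  X <= gprod0 S x y -> X <= gprod0 S y z -> X - delta <= gprod0 S x z.
Proof.
move=> Gx Gy Gz xy yz; rewrite /gprod0 in xy yz *.
have : X <= Num.min (gprod S 1%:M x y) (gprod S 1%:M y z) by rewrite le_min xy yz.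
by have := thin SL_group1 Gx Gy Gz; lra.
Qed.

Section SequencesToBoundary.
Variables (h a : nat -> 'M[R]_d).
Hypotheses (Gh : forall k, G (h k)) (bd_a : bd_point S G a) (h_a : seq_to_bd S h a).

Lemma seq_to_bd_wordlen B : \forall k \near \oo, B <= len (h k).
Proof.
have [N hN] := h_a B; exists N => // k le_Nk.
exact: le_trans (hN k N le_Nk (leqnn N)) (gprod0_le_wordlen (Gh k) (bd_a.1 N)).
Qed.

Lemma bd_conv_mxpow e : (\forall k \near \oo, powers_grow (h k) (len (h k) - e)) ->
  bd_conv S (fun k => mxpow (h k)) a.
Proof.
move=> [K0 _ grow] B; have [N hN] := h_a (B + delta).
have [K1 _ long] := seq_to_bd_wordlen (B + delta + e / 2).
exists (maxn K0 (maxn N K1)) => k; rewrite !geq_max => /and3P[le_K0 le_N le_K1].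
exists (maxn N 1) => -[|m] n; rewrite !geq_max ?andbF // => _ /andP[le_Nn _].
have := gprod0_thin (SL_group_mxpow m.+1 (Gh k)) (Gh k) (bd_a.1 n) _
  (hN k n le_N le_Nn).
have := powers_grow_gprod0_step (Gh k) (grow k le_K0) m.
have := long k le_K1; move: (gprod0 _ _ _) => p; lra.
Qed.

End SequencesToBoundary.

Lemma gprod0_invmx_bounded gam gplus gminus : (forall k, G (gam k)) ->
  bd_point S G gplus -> bd_point S G gminus -> ~ bd_equiv S gplus gminus ->
  seq_to_bd S gam gplus -> seq_to_bd S (fun k => invmx (gam k)) gminus ->
  exists c, \forall k \near \oo, gprod0 S (gam k) (invmx (gam k)) <= c.
Proof.
move=> Ggam [Gplus _] [Gminus _] plus_minus gam_plus gam_minus.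
(* If (gam k | gam k^-1) were large, the thin-triangle inequality through gam k
   and gam k^-1 would make (gplus m | gminus n) large for all large m and n. *)
have [B0 close] : exists B0, forall N, exists m n,
    [/\ (N <= m)%N, (N <= n)%N & gprod0 S (gplus m) (gminus n) < B0].
  apply: contrapT => far; apply: plus_minus => B; apply: contrapT => notB.
  apply: far; exists B => N; apply: contrapT => notN; apply: notB.
  exists N => m n le_m le_n; rewrite leNgt; apply/negP => lt_B.
  by apply: notN; exists m, n.
set B := B0 + 2 * delta.
have [Np hNp] := gam_plus B; have [Nm hNm] := gam_minus B.
have [m [n []]] := close (maxn Np Nm); rewrite !geq_max.
move=> /andP[le_Npm _] /andP[_ le_Nmn] lt_B0.
exists B, (maxn Np Nm) => // k /=; rewrite geq_max => /andP[le_Npk le_Nmk].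
rewrite leNgt; apply/negP => /ltW far_k.
have Gk := Ggam k; have Gk' := SL_groupV Gk.
have far_plus : B <= gprod0 S (gplus m) (gam k).
  by rewrite /gprod0 gprod_sym //; exact: hNp.
have far_minus : B - delta <= gprod0 S (invmx (gam k)) (gminus n).
  by apply: le_trans (hNm k n le_Nmk le_Nmn); have := delta_ge0; lra.
have far_pm := gprod0_thin (Gplus m) Gk Gk' far_plus far_k.
have := gprod0_thin (Gplus m) Gk' (Gminus n) far_pm far_minus; rewrite /B; lra.
Qed.

Lemma powers_grow_eventually gam gplus gminus : (forall k, G (gam k)) ->
  bd_point S G gplus -> bd_point S G gminus -> ~ bd_equiv S gplus gminus ->
  seq_to_bd S gam gplus -> seq_to_bd S (fun k => invmx (gam k)) gminus ->
  exists e, forall B, \forall k \near \oo,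
    B < len (gam k) - e /\ powers_grow (gam k) (len (gam k) - e).
Proof.
move=> Ggam bd_plus bd_minus plus_minus gam_plus gam_minus.
have [c small] :=
  gprod0_invmx_bounded Ggam bd_plus bd_minus plus_minus gam_plus gam_minus.
have long := seq_to_bd_wordlen Ggam bd_plus gam_plus.
exists (2 * (c + delta)) => B; near=> k.
have long_B : B + 2 * (c + delta) + 1 <= len (gam k) by near: k; exact: long.
have long_c : 2 * (c + delta) + 1 <= len (gam k) by near: k; exact: long.
split; first lra.
by apply: powers_grow_thin (Ggam k) _ _; [near: k | lra].
Unshelve. all: by end_near.
Qed.

Lemma repelling_points_cvg gam gminus e : (forall k, G (gam k)) ->
  bd_point S G gminus -> seq_to_bd S (fun k => invmx (gam k)) gminus ->
  (\forall k \near \oo,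
     0 < len (gam k) - e /\ powers_grow (gam k) (len (gam k) - e)) ->
  exists x : nat -> nat -> 'M[R]_d, [/\ forall k, bd_point S G (x k),
    bd_conv S x gminus & \forall k \near \oo, x k = mxpow (invmx (gam k))].
Proof.
move=> Ggam bd_minus gam_minus [K0 _ growK0].
have Ginv k := SL_groupV (Ggam k).
have grow_inv : \forall k \near \oo,
    powers_grow (invmx (gam k)) (len (invmx (gam k)) - e).
  exists K0 => // k /= /growK0[_ grow_k]; rewrite wordlen_invmx //.
  exact: (powers_grow_invmx _ grow_k).
(* Padding with [gminus] below [K0] makes every term a boundary point, as the
   continuity clause of [limit_maps] requires. *)
exists (fun k => if (K0 <= k)%N then mxpow (invmx (gam k)) else gminus); split.
- move=> k; case: ifP => // /growK0[r_gt0 grow_k].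
  exact: (powers_grow_bd_point (Ginv k) (powers_grow_invmx (Ggam k) grow_k) r_gt0).
- move=> B; have [K1 conv] := bd_conv_mxpow Ginv bd_minus gam_minus grow_inv B.
  exists (maxn K0 K1) => k; rewrite geq_max => /andP[le_K0 le_K1].
  by rewrite le_K0; exact: conv.
- by exists K0 => // k /= ->.
Qed.

End WordMetric.

Section Eigenvalues.
Variables (R : realType) (d : nat).
Implicit Types (g : 'M[R]_d) (s : seq R[i]).

Lemma map_poly_toC (p : {poly R}) : map_poly (@toC R) p = map_poly (real_complex R) p.
Proof. by []. Qed.

Lemma eig_seq_exists g : exists s, eig_seq g s.
Proof.
have [s char_s] := closed_field_poly_normal (map_poly (@toC R) (char_poly g)).
exists s; rewrite /eig_seq {1}char_s map_poly_toC lead_coef_map.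
by rewrite (monicP (char_poly_monic g)) rmorph1 scale1r.
Qed.

Lemma eig_seq_SL g s : \det g = 1 -> eig_seq g s ->
  size s = d /\ \prod_(z <- s) modC z = 1.
Proof.
rewrite /eig_seq map_poly_toC => det1 char_s; split.
  have := size_prod_XsubC s id.
  by rewrite -char_s size_map_poly size_char_poly => -[].
have := congr1 (fun p => `|p.[0]|) char_s.
rewrite /= -(rmorph0 (real_complex R)) horner_map horner_prod horner_coef0 normr_prod.
rewrite char_poly_det det1 mulr1 rmorphXn rmorphN rmorph1 normrX normrN normr1 expr1n.
under eq_bigr do rewrite hornerXsubC sub0r normrN normc_def.
by rewrite -rmorph_prod => /esym/complexI.
Qed.

Lemma sorted_top_two_ge1 (m0 m1 : R) t :
  sorted (fun x y => y <= x) [:: m0, m1 & t] -> (forall y, y \in t -> 0 <= y) ->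
  0 <= m1 -> m0 * (m1 * \prod_(y <- t) y) = 1 -> 1 <= m0 * m1.
Proof.
move=> /= /andP[le_10 path_t] t_ge0 m1_ge0 prod1.
have /allP le_t := order_path_min (rev_trans le_trans) path_t.
have [m1_ge1|m1_lt1] := leP 1 m1; first by rewrite mulr_ege1 ?(le_trans m1_ge1).
rewrite -prod1 mulrA ler_piMr ?mulr_ge0 ?(le_trans m1_ge0) // big_seq_cond.
apply: prodr_ile1 => y /andP[yt _]; rewrite t_ge0 //=.
exact: le_trans (le_t y yt) (ltW m1_lt1).
Qed.

Lemma lam12_le_top g s mu : (1 < d)%N -> \det g = 1 -> eig_seq g s ->
  top_modulus g mu -> expR (lam12 s / 2) <= `|mu|.
Proof.
move=> d_gt1 det1 char_s top_mu; have [size_s prod_s] := eig_seq_SL det1 char_s.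
rewrite /lam12; set m := sort _ _.
have perm_m : perm_eq m (map (@modC R) s) by rewrite perm_sort.
have m_ge0 y : y \in m -> 0 <= y.
  by rewrite (perm_mem perm_m) => /mapP[z _ ->]; exact: sqrtr_ge0.
have m_le_mu y : y \in m -> y <= `|mu|.
  by rewrite (perm_mem perm_m) => /mapP[z zs ->]; exact: top_mu char_s z zs.
have sorted_m : sorted (fun x y => y <= x) m.
  by apply: sort_sorted => x y; exact: le_total.
have prod_m : \prod_(y <- m) y = 1 by rewrite (perm_big _ perm_m) big_map.
have size_m : (1 < size m)%N by rewrite (perm_size perm_m) size_map size_s.
move: m m_ge0 m_le_mu sorted_m prod_m size_m {perm_m} => [|m0 [|m1 t]] //=.
move=> m_ge0 m_le_mu sorted_m; rewrite !big_cons => prod_m _.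
have m1_ge0 : 0 <= m1 by rewrite m_ge0 ?inE ?eqxx ?orbT.
have t_ge0 y : y \in t -> 0 <= y by move=> yt; rewrite m_ge0 ?inE ?yt ?orbT.
have top2 := sorted_top_two_ge1 sorted_m t_ge0 m1_ge0 prod_m.
have m1_gt0 : 0 < m1.
  rewrite lt_neqAle m1_ge0 andbT.
  by apply: contraTneq top2 => <-; rewrite mulr0 ler10.
have m0_gt0 : 0 < m0 by case/andP: sorted_m => /(lt_le_trans m1_gt0).
apply: le_trans (m_le_mu m0 (mem_head _ _)); rewrite -[leRHS]lnK ?posrE // ler_expR.
by have := ln_ge0 top2; rewrite lnM ?posrE //; lra.
Qed.

End Eigenvalues.

Lemma mx_entry_norm_le (R : realType) m n (A : 'M[R]_(m, n)) i j : `|A i j| <= `|A|.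
Proof.
by rewrite [leRHS]/Num.norm /= mx_normrE; apply/bigmax_geP; right; exists (i, j).
Qed.

Section MatrixLimits.
Variables (R : realType) (m n p : nat).

Lemma mulmx_entry_norm_le (A : 'M[R]_(m, n)) (B : 'M[R]_(n, p)) i j :
  `|(A *m B) i j| <= n%:R * (`|A| * `|B|).
Proof.
rewrite mxE; apply: le_trans (ler_norm_sum _ _ _) _.
rewrite -[n in n%:R]card_ord mulr_natl -sumr_const; apply: ler_sum => k _.
by rewrite normrM; apply: ler_pM => //; exact: mx_entry_norm_le.
Qed.

Lemma cvg_mulmx_entry {T} (F : set_system T) {FF : Filter F}
    (A : T -> 'M[R]_(m, n)) (B : T -> 'M[R]_(n, p)) (A0 : 'M[R]_(m, n))
    (B0 : 'M[R]_(n, p)) i j :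
  A @ F --> A0 -> B @ F --> B0 -> (fun t => (A t *m B t) i j) @ F --> (A0 *m B0) i j.
Proof.
move=> AA0 BB0; rewrite mxE; under eq_cvg do rewrite mxE.
apply: cvg_big => [|k _]; first exact: add_continuous.
apply: cvgM.
  have := continuous_cvg _ (@coord_continuous R _ _ i k A0) AA0; exact.
have := continuous_cvg _ (@coord_continuous R _ _ k j B0) BB0; exact.
Qed.

End MatrixLimits.

Lemma pairing_ratio_bounded (R : realType) d (w : nat -> 'rV[R]_d) (X : 'rV[R]_d)
    (x : nat -> 'cV[R]_d) (v : 'cV[R]_d) (M : R) :
  w @ \oo --> X -> x @ \oo --> v -> X *m v != 0 ->
  exists T, \forall k \near \oo, forall (mu : R) (u : 'cV[R]_d),
    `|u| <= M -> w k *m u = mu *: (w k *m x k) -> `|mu| <= T.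
Proof.
move=> wX xv Xv_neq0; set F := `|(X *m v) 0 0|.
have F_gt0 : 0 < F.
  rewrite normr_gt0; apply: contra Xv_neq0 => /eqP Xv0.
  by apply/eqP/matrixP => i j; rewrite !ord1 Xv0 mxE.
set D := d%:R * ((`|X| + 1) * M).
exists (2 * D / F).
have w_near : \forall k \near \oo, `|w k| <= `|X| + 1.
  by apply: (cvgr_norm_le _ wX); rewrite ltrDl.
have wx_near : \forall k \near \oo, F / 2 < `|(w k *m x k) 0 0|.
  by apply: (cvgr_norm_gt _ (cvg_mulmx_entry wX xv)); rewrite -/F; lra.
near=> k => mu u u_le wu.
have wuE : (w k *m u) 0 0 = mu * (w k *m x k) 0 0 by rewrite wu mxE.
have : `|mu| * `|(w k *m x k) 0 0| <= D.
  rewrite -normrM -wuE; apply: le_trans (mulmx_entry_norm_le _ _ _ _) _.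
  by rewrite ler_wpM2l // ler_pM //; near: k.
have : `|mu| * (F / 2) <= `|mu| * `|(w k *m x k) 0 0|.
  by rewrite ler_wpM2l // ltW //; near: k.
rewrite ler_pdivlMr //; lra.
Unshelve. all: by end_near.
Qed.

Lemma dual_eigenvalue_ge (R : realType) d (G : set 'M[R]_d) S xi xis c0 c0' g r :
  (1 < d)%N -> subgroup_SL G -> generates S G -> limit_maps S G xi xis -> 0 < c0 ->
  (forall h, G h -> forall s, eig_seq h s -> c0 * stable_len S h - c0' <= lam12 s) ->
  G g -> powers_grow S g r -> 0 < r ->
  exists mu, xis (mxpow (invmx g)) *m g = mu *: xis (mxpow (invmx g))
             /\ expR ((c0 * r - c0') / 2) <= `|mu|.
Proof.
move=> d_gt1 SL_G gen_S [_ [_ [_ [_ [_ dyn]]]]] c0_gt0 anosov Gg grow r_gt0.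
have [_ [mu [mu_eig top_mu]]] :=
  dyn g Gg (fun n => powers_grow_mxpow_neq1 grow r_gt0).
exists mu; split=> //; have [s char_s] := eig_seq_exists g.
have det1 : \det g = 1 by case: SL_G => _ _ _; apply.
apply: le_trans (lam12_le_top d_gt1 det1 char_s top_mu); rewrite ler_expR.
have := anosov g Gg s char_s; have := powers_grow_stable_len SL_G gen_S Gg grow.
rewrite -(ler_pM2l c0_gt0); lra.
Qed.

Theorem lemma3p2 (R : realType) (d : nat) (G : set 'M[R]_d) (S : seq 'M[R]_d)
    (xi : (nat -> 'M[R]_d) -> 'cV[R]_d) (xis : (nat -> 'M[R]_d) -> 'rV[R]_d)
    (gam : nat -> 'M[R]_d) (gplus gminus : nat -> 'M[R]_d)
    (v_ : nat -> 'cV[R]_d) (v : 'cV[R]_d) :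
  (1 < d)%N ->
  subgroup_SL G -> generates S G -> torsion_free G ->
  projective_anosov S G -> limit_maps S G xi xis ->
  (forall k, G (gam k)) ->
  bd_point S G gplus -> bd_point S G gminus -> ~ bd_equiv S gplus gminus ->
  seq_to_bd S gam gplus -> seq_to_bd S (fun k => invmx (gam k)) gminus ->
  v_ @ \oo --> v -> v != 0 -> xis gminus *m v != 0 ->
  forall K : set 'cV[R]_d, compact K -> \forall k \near \oo, ~ K (gam k *m v_ k).
Proof.
move=> d_gt1 SL_G gen_S _ [[delta [delta_ge0 thin]] [c0 [c0' [c0_gt0 [_ anosov]]]]].
move=> limits Ggam bd_plus bd_minus plus_minus gam_plus gam_minus v_v _ xis_v K.
move=> /compact_bounded[M [_ K_bounded]]; have [_ [_ [_ [xi_cont _]]]] := limits.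
have [e grow] := powers_grow_eventually SL_G gen_S delta_ge0 thin Ggam
  bd_plus bd_minus plus_minus gam_plus gam_minus.
have [x [bd_x conv_x x_eq]] :=
  repelling_points_cvg SL_G gen_S thin Ggam bd_minus gam_minus (grow 0).
have [_ [w [w_line w_cvg]]] := xi_cont x gminus bd_x bd_minus conv_x.
have [T T_near] := pairing_ratio_bounded (M + 1) w_cvg v_v xis_v.
pose r k := (wordlen S (gam k))%:R - e.
near=> k => Kk.
have [r_gt0 _] : 0 < r k /\ powers_grow S (gam k) (r k) by near: k; exact: grow.
have [large grow_k] : (2 * T + c0') / c0 < r k /\ powers_grow S (gam k) (r k).
  by near: k; exact: grow.
have [mu [mu_eig mu_ge]] :=
  dual_eigenvalue_ge d_gt1 SL_G gen_S limits c0_gt0 anosov (Ggam k) grow_k r_gt0.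
have [c [_ wk]] := w_line k.
have xk : x k = mxpow (invmx (gam k)) by near: k.
have T_k : forall mu u, `|u| <= M + 1 -> w k *m u = mu *: (w k *m v_ k) -> `|mu| <= T.
  by near: k.
have : `|mu| <= T.
  apply: T_k (gam k *m v_ k) _ _; first by apply: (K_bounded (M + 1)); rewrite ?ltrDl.
  by rewrite wk xk -!scalemxAl mulmxA mu_eig -scalemxAl !scalerA mulrC.
have := expR_ge1Dx ((c0 * r k - c0') / 2).
by rewrite ltr_pdivrMr // mulrC in large; lra.
Unshelve. all: by end_near.
Qed.
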